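(* Let $X$ be a special (abstract) rank one group with abelian unipotent subgroups $A$ and $B$, and set $H = N_X(A) \cap N_X(B)$. If $|A| \geq 4$, then $A = [A,H]$.
   Context: For a group $X$ and $g,x \in X$, write $x^g = g^{-1}xg$, $A^g = g^{-1}Ag$, and $[x,g] = x^{-1}g^{-1}xg$; $[A,H]$ denotes the subgroup generated by all $[a,h]$ with $a \in A$, $h \in H$. A group $X$ is an (abstract) rank one group with abelian unipotent subgroups $A$ and $B$ if $X = \langle A, B\rangle$ where $A$ and $B$ are different abelian subgroups of $X$ such that for each $1 \neq a \in A$ there is an element $1 \neq b \in B$ with $A^b = B^a$, and for each $1 \neq b \in B$ there is an element $1 \neq a \in A$ with $B^a = A^b$. In such a group, for each $1 \neq a \in A$ the element $1 \neq b \in B$ with $A^b = B^a$ is uniquely determined and is denoted $b(a)$. The group $X$ is called special if $b(a^{-1}) = b(a)^{-1}$ for all $1 \neq a \in A$. *)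

Record group := Group {
  carrier :> Type;
  gmul : carrier -> carrier -> carrier;
  ginv : carrier -> carrier;
  gone : carrier;
  gmulA : forall x y z, gmul x (gmul y z) = gmul (gmul x y) z;
  gmul1 : forall x, gmul gone x = x;
  gmulV : forall x, gmul (ginv x) x = gone
}.

Section Defs.
Variable X : group.

Definition subset := X -> Prop.

Definition set_eq (P Q : subset) : Prop := forall x, P x <-> Q x.

Definition conj (x g : X) : X := gmul X (gmul X (ginv X g) x) g.

Definition conjset (A : subset) (g : X) : subset :=
  fun y => exists a, A a /\ y = conj a g.

Definition comm (x g : X) : X :=
  gmul X (gmul X (gmul X (ginv X x) (ginv X g)) x) g.

Definition is_subgroup (S : subset) : Prop :=
  S (gone X) /\
  (forall x y, S x -> S y -> S (gmul X x y)) /\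
  (forall x, S x -> S (ginv X x)).

Definition generated (S : subset) : subset :=
  fun x => forall K, is_subgroup K -> (forall s, S s -> K s) -> K x.

Definition is_abelian_subgroup (A : subset) : Prop :=
  is_subgroup A /\ forall x y, A x -> A y -> gmul X x y = gmul X y x.

Definition normalizer (A : subset) : subset :=
  fun g => set_eq (conjset A g) A.

Definition commsub (A H : subset) : subset :=
  generated (fun x => exists a h, A a /\ H h /\ x = comm a h).

Definition rank_one (A B : subset) : Prop :=
  is_abelian_subgroup A /\ is_abelian_subgroup B /\
  ~ set_eq A B /\
  set_eq (generated (fun x => A x \/ B x)) (fun _ => True) /\
  (forall a, A a -> a <> gone X ->
     exists b, B b /\ b <> gone X /\ set_eq (conjset A b) (conjset B a)) /\
  (forall b, B b -> b <> gone X ->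
     exists a, A a /\ a <> gone X /\ set_eq (conjset B a) (conjset A b)).

(* special: b(a^-1) = b(a)^-1, where b(a) is the (unique) 1 <> b in B with
   A^b = B^a.  Stated as: whenever b is (the) b(a) and b' is (the) b(a^-1),
   then b' = b^-1. *)
Definition special (A B : subset) : Prop :=
  forall a b, A a -> a <> gone X -> B b -> b <> gone X ->
    set_eq (conjset A b) (conjset B a) ->
    forall b', B b' -> b' <> gone X ->
      set_eq (conjset A b') (conjset B (ginv X a)) ->
      b' = ginv X b.

Definition card_ge4 (A : subset) : Prop :=
  exists a1 a2 a3 a4, A a1 /\ A a2 /\ A a3 /\ A a4 /\
    a1 <> a2 /\ a1 <> a3 /\ a1 <> a4 /\ a2 <> a3 /\ a2 <> a4 /\ a3 <> a4.

End Defs.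

(* Write K = [A, H]; it is a subgroup of A since H normalizes A, and as A is
   abelian the relation  u == v  :<->  v^-1 u \in K  is a congruence on A.
   For 1 <> a in A let b = b(a), i.e. A^b = B^a.  Specialness gives that
   mu(a) = a b^-1 a interchanges A and B and conjugates b^-1 to a.  Hence for
   any g interchanging A and B, the element mu(a)^-1 g lies in H, and
   b(a)^g == a^-1  (conjugation by an element of H is trivial modulo K).
   Applying this with g = mu(a) to y, to y a^-1 and to the element e of A
   attached to b(y) b(a)^-1, one obtains  y^2 == a  for all distinct nontrivial y, a in A.
   With four elements of A, every nontrivial t satisfies t^2 == t, so t \in K. *)

From Stdlib Require Import Classical Setoid.

Local Notation "x ** y" := (gmul _ x y) (at level 40, left associativity).
Local Notation inv := (ginv _).

Section GroupCalculus.
Context {X : group}.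

Lemma mulA_r (x y z : X) : (x ** y) ** z = x ** (y ** z).
Proof. symmetry; apply gmulA. Qed.

Lemma mulVg (x : X) : inv x ** x = gone X. Proof. apply gmulV. Qed.

Lemma mul1g (x : X) : gone X ** x = x. Proof. apply gmul1. Qed.

Lemma mulKg (x y : X) : inv x ** (x ** y) = y.
Proof. rewrite gmulA, mulVg, mul1g. reflexivity. Qed.

Lemma mulgV (x : X) : x ** inv x = gone X.
Proof.
  transitivity (inv (inv x) ** (inv x ** (x ** inv x))).
  - rewrite gmulA, mulVg, mul1g. reflexivity.
  - rewrite (mulKg x (inv x)). apply mulVg.
Qed.

Lemma mulg1 (x : X) : x ** gone X = x.
Proof. rewrite <- (mulVg x), gmulA, mulgV, mul1g. reflexivity. Qed.

Lemma mulKVg (x y : X) : x ** (inv x ** y) = y.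
Proof. rewrite gmulA, mulgV, mul1g. reflexivity. Qed.

Lemma inv_unique (x y : X) : x ** y = gone X -> inv y = x.
Proof.
  intro H. rewrite <- (mulg1 x), <- (mulgV y), gmulA, H, mul1g. reflexivity.
Qed.

Lemma eq_of_mul_inv (u v : X) : u ** inv v = gone X -> u = v.
Proof. intro H. rewrite <- (mulg1 u), <- (mulVg v), gmulA, H, mul1g. reflexivity. Qed.

Lemma invgK (x : X) : inv (inv x) = x.
Proof. apply inv_unique, mulgV. Qed.

Lemma invMg (x y : X) : inv (x ** y) = inv y ** inv x.
Proof. apply inv_unique. rewrite !mulA_r, mulKg, mulVg. reflexivity. Qed.

Lemma invg1 : inv (gone X) = gone X.
Proof. apply inv_unique, mul1g. Qed.

End GroupCalculus.

Ltac gsimpl := repeat progress (rewrite ?mulA_r, ?invMg, ?invgK, ?invg1,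
  ?mulKg, ?mulKVg, ?mulgV, ?mulVg, ?mul1g, ?mulg1).

Section Conjugation.
Context {X : group}.

Lemma conjM (x y g : X) : conj X (x ** y) g = conj X x g ** conj X y g.
Proof. unfold conj; gsimpl; reflexivity. Qed.

Lemma conjJ (x g h : X) : conj X (conj X x g) h = conj X x (g ** h).
Proof. unfold conj; gsimpl; reflexivity. Qed.

Lemma conj1 (x : X) : conj X x (gone X) = x.
Proof. unfold conj; gsimpl; reflexivity. Qed.

Lemma conjV (x g : X) : conj X (inv x) g = inv (conj X x g).
Proof. unfold conj; gsimpl; reflexivity. Qed.

Lemma conj_self (g : X) : conj X g g = g.
Proof. unfold conj; gsimpl; reflexivity. Qed.

End Conjugation.

Section Transport.
Context {X : group}.

Definition maps_to (S : X -> Prop) (g : X) (T : X -> Prop) : Prop :=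
  forall y, S y <-> T (conj X y g).

Lemma maps_to_comp S T U (g h : X) : maps_to S g T -> maps_to T h U -> maps_to S (g ** h) U.
Proof. intros H1 H2 y. rewrite (H1 y), (H2 _), conjJ. reflexivity. Qed.

Lemma maps_to_inv S T (g : X) : maps_to S g T -> maps_to T (inv g) S.
Proof. intros H y. rewrite (H _), conjJ, mulVg, conj1. reflexivity. Qed.

Lemma maps_to_self S (g : X) : is_subgroup X S -> S g -> maps_to S g S.
Proof.
  intros [_ [Hmul Hinv]] Hg y; split; intro Hy.
  - unfold conj. apply Hmul; auto.
  - assert (E : y = (g ** conj X y g) ** inv g) by (unfold conj; gsimpl; reflexivity).
    rewrite E. apply Hmul; auto.
Qed.

Lemma conjset_iff S (g x : X) : conjset X S g x <-> S (conj X x (inv g)).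
Proof.
  unfold conjset; split.
  - intros [a [Ha ->]]. rewrite conjJ, mulgV, conj1. exact Ha.
  - intro H. exists (conj X x (inv g)). split; auto.
    rewrite conjJ, mulVg, conj1; reflexivity.
Qed.

Lemma conjset_maps_to S T (g : X) : set_eq X (conjset X S g) T <-> maps_to S g T.
Proof.
  unfold set_eq, maps_to. split; intros H y.
  - rewrite <- (H (conj X y g)), conjset_iff, conjJ, mulgV, conj1. reflexivity.
  - rewrite conjset_iff, (H _), conjJ, mulVg, conj1. reflexivity.
Qed.

Lemma conjset2_maps_to S T (g h : X) :
  set_eq X (conjset X S g) (conjset X T h) <-> maps_to S (g ** inv h) T.
Proof.
  rewrite conjset_maps_to. unfold maps_to. split; intros H y.
  - rewrite (H y), conjset_iff, conjJ. reflexivity.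
  - rewrite conjset_iff, conjJ. apply H.
Qed.

Lemma generated_subgroup (S : X -> Prop) : is_subgroup X (generated X S).
Proof.
  unfold generated; split; [|split].
  - intros K [H1 _] _; exact H1.
  - intros x y Hx Hy K HK HS. destruct HK as [H1 [Hm Hi]].
    apply Hm; [apply Hx | apply Hy]; auto; split; auto.
  - intros x Hx K HK HS. destruct HK as [H1 [Hm Hi]].
    apply Hi; apply Hx; auto; split; auto.
Qed.

Lemma generated_in (S : X -> Prop) x : S x -> generated X S x.
Proof. intros Hx K _ HS; auto. Qed.

End Transport.

Lemma two_avoiding {T : Type} (P : T -> Prop) (f1 f2 : T) :
  (exists a1 a2 a3 a4, P a1 /\ P a2 /\ P a3 /\ P a4 /\
     a1 <> a2 /\ a1 <> a3 /\ a1 <> a4 /\ a2 <> a3 /\ a2 <> a4 /\ a3 <> a4) ->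
  exists p q, P p /\ P q /\ p <> q /\ p <> f1 /\ p <> f2 /\ q <> f1 /\ q <> f2.
Proof.
  intros (a1 & a2 & a3 & a4 & H1 & H2 & H3 & H4 & ?&?&?&?&?&?).
  destruct (classic (a1 = f1)); destruct (classic (a1 = f2));
  destruct (classic (a2 = f1)); destruct (classic (a2 = f2));
  destruct (classic (a3 = f1)); destruct (classic (a3 = f2));
  destruct (classic (a4 = f1)); destruct (classic (a4 = f2));
  try congruence;
  first
    [ exists a1, a2; tauto | exists a1, a3; tauto | exists a1, a4; tauto
    | exists a2, a3; tauto | exists a2, a4; tauto | exists a3, a4; tauto ].
Qed.

Section RankOne.
Context {X : group} (A B : X -> Prop).
Hypothesis rankAB : rank_one X A B.

Lemma A_subgroup : is_subgroup X A.
Proof. destruct rankAB as (HA & _). apply HA. Qed.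

Lemma B_subgroup : is_subgroup X B.
Proof. destruct rankAB as (_ & HB & _). apply HB. Qed.

Lemma A_comm (x y : X) : A x -> A y -> x ** y = y ** x.
Proof. destruct rankAB as (HA & _). intros Hx Hy. apply (proj2 HA); auto. Qed.

(* Existence of b(a): A^b = B^a, i.e. A^(b a^-1) = B. *)
Lemma b_exists (a : X) : A a -> a <> gone X ->
  exists b, B b /\ b <> gone X /\ maps_to A (b ** inv a) B.
Proof.
  intros Ha Hna. destruct rankAB as (_ & _ & _ & _ & Hb_of & _).
  destruct (Hb_of a Ha Hna) as [b [Hb [Hnb HE]]].
  exists b. rewrite conjset2_maps_to in HE. auto.
Qed.

Lemma a_exists (b : X) : B b -> b <> gone X ->
  exists a, A a /\ a <> gone X /\ maps_to B (a ** inv b) A.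
Proof.
  intros Hb Hnb. destruct rankAB as (_ & _ & _ & _ & _ & Ha_of).
  destruct (Ha_of b Hb Hnb) as [a [Ha [Hna HE]]].
  exists a. rewrite conjset2_maps_to in HE. auto.
Qed.

(* N_A(B) = 1: otherwise A^(b a^-1 a b^-1) = B^(b^-1) = B, i.e. A = B. *)
Lemma normalizer_B_in_A (a : X) : A a -> maps_to B a B -> a = gone X.
Proof.
  intros Ha HaB. destruct (classic (a = gone X)) as [E|Hna]; auto.
  destruct (b_exists a Ha Hna) as [b [Hb [_ Hab]]].
  assert (HAB := maps_to_comp _ _ _ _ _ (maps_to_comp _ _ _ _ _ Hab HaB)
    (maps_to_self _ _ B_subgroup (proj2 (proj2 B_subgroup) b Hb))).
  replace (((b ** inv a) ** a) ** inv b) with (gone X) in HAB by (gsimpl; reflexivity).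
  exfalso. destruct rankAB as (_ & _ & HneAB & _). apply HneAB. intro x.
  rewrite (HAB x), conj1. reflexivity.
Qed.

Lemma eq_of_normalizes_B (u v : X) : A u -> A v -> maps_to B (u ** inv v) B -> u = v.
Proof.
  intros Hu Hv H. destruct A_subgroup as [_ [Hmul Hinv]].
  apply eq_of_mul_inv, normalizer_B_in_A; auto.
Qed.

Hypothesis specialAB : special X A B.

Lemma b_of_inv (a b b' : X) : A a -> a <> gone X -> B b -> b <> gone X ->
  maps_to A (b ** inv a) B -> B b' -> b' <> gone X -> maps_to A (b' ** a) B ->
  b' = inv b.
Proof.
  intros Ha Hna Hb Hnb H Hb' Hnb' H'.
  apply (specialAB a b Ha Hna Hb Hnb); auto.
  - apply conjset2_maps_to; auto.
  - apply conjset2_maps_to. rewrite invgK. auto.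
Qed.

Lemma mu_swaps (a b : X) : A a -> a <> gone X -> B b -> b <> gone X ->
  maps_to A (b ** inv a) B ->
  maps_to A ((a ** inv b) ** a) B /\ maps_to B ((a ** inv b) ** a) A.
Proof.
  intros Ha Hna Hb Hnb H.
  destruct A_subgroup as [H1 [Hmul Hinv]].
  assert (Hnia : inv a <> gone X).
  { intro E. apply Hna. rewrite <- (invgK a), E, invg1. reflexivity. }
  destruct (b_exists (inv a) (Hinv a Ha) Hnia) as [b' [Hb' [Hnb' H']]].
  rewrite invgK in H'.
  assert (Eb := b_of_inv a b b' Ha Hna Hb Hnb H Hb' Hnb' H'). subst b'.
  split.
  - rewrite mulA_r. apply (maps_to_comp _ A); auto. apply maps_to_self; auto.
    split; auto.
  - apply (maps_to_comp _ A). 2: apply maps_to_self; auto; split; auto.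
    pose proof (maps_to_inv _ _ _ H) as H2. rewrite invMg, invgK in H2. exact H2.
Qed.

(* Moreover mu conjugates b^-1 to a.  Writing c = (b^-1)^mu in A and
   d = a^mu in B, one gets mu = d c d and a c^-1 normalizes B. *)
Lemma mu_conj_binv (a b : X) : A a -> a <> gone X -> B b -> b <> gone X ->
  maps_to A (b ** inv a) B -> conj X (inv b) ((a ** inv b) ** a) = a.
Proof.
  intros Ha Hna Hb Hnb H.
  destruct (mu_swaps a b Ha Hna Hb Hnb H) as [HAm HBm].
  remember ((a ** inv b) ** a) as mu eqn:Hmu.
  destruct A_subgroup as [H1 [Hm Hi]].
  destruct B_subgroup as [H1b [Hmb Hib]].
  remember (conj X (inv b) mu) as c eqn:Hc.
  remember (conj X a mu) as d eqn:Hd.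
  assert (Hc' : A c) by (rewrite Hc; apply HBm; auto).
  assert (Hd' : B d) by (rewrite Hd; apply HAm; auto).
  assert (Hmu_dcd : mu = (d ** c) ** d).
  { assert (E : conj X ((a ** inv b) ** a) mu = (d ** c) ** d)
      by (rewrite Hc, Hd, !conjM; reflexivity).
    rewrite <- Hmu, conj_self in E. exact E. }
  assert (Ha_d : a = (mu ** d) ** inv mu) by (rewrite Hd; unfold conj; gsimpl; reflexivity).
  assert (Hcd : maps_to B (c ** d) A).
  { rewrite Hmu_dcd in HBm.
    pose proof (maps_to_comp _ _ _ _ _ (maps_to_self B (inv d) B_subgroup (Hib _ Hd')) HBm) as P.
    replace (inv d ** ((d ** c) ** d)) with (c ** d) in P by (gsimpl; reflexivity). exact P. }
  assert (Hdc := maps_to_inv _ _ _ Hcd). rewrite invMg in Hdc.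
  assert (Hloop : maps_to B (((d ** (c ** d)) ** inv c) ** (inv d ** inv c)) B).
  { apply (maps_to_comp _ A); auto. apply (maps_to_comp _ A).
    2: apply maps_to_self; auto; split; auto.
    apply (maps_to_comp _ B); auto. apply maps_to_self; auto; split; auto. }
  assert (E2 : a ** inv c = ((d ** (c ** d)) ** inv c) ** (inv d ** inv c)).
  { rewrite Ha_d, Hmu_dcd. gsimpl. reflexivity. }
  rewrite <- E2 in Hloop.
  symmetry. apply eq_of_normalizes_B; auto.
Qed.

Definition commAH : X -> Prop :=
  commsub X A (fun h => normalizer X A h /\ normalizer X B h).

Lemma commAH_subgroup : is_subgroup X commAH.
Proof. apply generated_subgroup. Qed.

Lemma comm_in_commAH (u h : X) : A u -> maps_to A h A -> maps_to B h B ->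
  commAH (comm X u h).
Proof.
  intros Hu HhA HhB. apply generated_in. exists u, h.
  unfold normalizer. rewrite !conjset_maps_to. auto.
Qed.

(* [A, H] <= A since [u, h] = u^-1 u^h and H normalizes A. *)
Lemma commAH_sub_A (x : X) : commAH x -> A x.
Proof.
  intro Hx. apply Hx; [apply A_subgroup|].
  intros s (u & h & Hu & [HhA _] & ->). unfold normalizer in HhA.
  rewrite conjset_maps_to in HhA. destruct A_subgroup as [_ [Hmul Hinv]].
  replace (comm X u h) with (inv u ** conj X u h) by (unfold comm, conj; gsimpl; reflexivity).
  apply Hmul; auto. apply (proj1 (HhA u)); auto.
Qed.

Definition congK (u v : X) : Prop := commAH (inv v ** u).

Lemma congK_refl (u : X) : congK u u.
Proof. unfold congK. rewrite mulVg. apply commAH_subgroup. Qed.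

Lemma congK_sym (u v : X) : congK u v -> congK v u.
Proof.
  unfold congK; intro H. destruct commAH_subgroup as [_ [_ Hinv]].
  replace (inv u ** v) with (inv (inv v ** u)) by (gsimpl; reflexivity). auto.
Qed.

Lemma congK_trans (u v w : X) : congK u v -> congK v w -> congK u w.
Proof.
  unfold congK; intros H1 H2. destruct commAH_subgroup as [_ [Hmul _]].
  replace (inv w ** u) with ((inv w ** v) ** (inv v ** u)) by (gsimpl; reflexivity). auto.
Qed.

(* Compatibility with products: K <= A and A is abelian. *)
Lemma congK_mul (u v u' v' : X) : A v' ->
  congK u v -> congK u' v' -> congK (u ** u') (v ** v').
Proof.
  unfold congK; intros Hv' H1 H2. destruct commAH_subgroup as [_ [Hmul _]].
  destruct A_subgroup as [_ [_ HinvA]].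
  replace (inv (v ** v') ** (u ** u')) with ((inv v ** u) ** (inv v' ** u')); auto.
  transitivity (inv v' ** ((inv v ** u) ** u')).
  2: gsimpl; reflexivity.
  rewrite (gmulA _ (inv v ** u)), (gmulA _ (inv v')), (A_comm (inv v ** u) (inv v')); auto.
  apply commAH_sub_A; auto.
Qed.

Lemma congK_inv (u v : X) : A u -> congK u v -> congK (inv u) (inv v).
Proof.
  unfold congK; intros Hu H. destruct commAH_subgroup as [_ [_ Hinv]].
  destruct A_subgroup as [_ [HmulA HinvA]].
  assert (Huv : A (inv u ** v)).
  { replace (inv u ** v) with (inv (inv v ** u)) by (gsimpl; reflexivity).
    apply HinvA, commAH_sub_A; auto. }
  replace (inv (inv v) ** inv u) with (inv u ** v).
  - replace (inv u ** v) with (inv (inv v ** u)) by (gsimpl; reflexivity). auto.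
  - rewrite invgK. symmetry. transitivity (u ** ((inv u ** v) ** inv u)); [gsimpl; reflexivity|].
    rewrite (A_comm _ (inv u)) by auto. gsimpl. reflexivity.
Qed.

(* Key step: if g interchanges A and B then mu(u)^-1 g lies in H, whence
   b(u)^g = (b(u)^mu(u))^(mu(u)^-1 g) = (u^-1)^h == u^-1. *)
Lemma conj_b_swap (u bu g : X) : A u -> u <> gone X -> B bu -> bu <> gone X ->
  maps_to A (bu ** inv u) B -> maps_to A g B -> maps_to B g A ->
  congK (conj X bu g) (inv u).
Proof.
  intros Hu Hnu Hb Hnb H HgA HgB.
  destruct (mu_swaps u bu Hu Hnu Hb Hnb H) as [HAm HBm].
  assert (Hbu : conj X bu ((u ** inv bu) ** u) = inv u).
  { rewrite <- (invgK (conj X bu _)), <- conjV, (mu_conj_binv u bu); auto. }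
  set (h := inv ((u ** inv bu) ** u) ** g).
  assert (Hk : commAH (comm X (inv u) h)).
  { apply comm_in_commAH.
    - destruct A_subgroup as [_ [_ Hinv]]. auto.
    - apply (maps_to_comp _ B); auto. apply maps_to_inv; auto.
    - apply (maps_to_comp _ A); auto. apply maps_to_inv; auto. }
  unfold congK. replace (conj X bu g) with (conj X (inv u) h).
  - replace (inv (inv u) ** conj X (inv u) h) with (comm X (inv u) h)
      by (unfold conj, comm; gsimpl; reflexivity). exact Hk.
  - rewrite <- Hbu, conjJ. unfold h. rewrite mulKVg. reflexivity.
Qed.

(* Let mu = a b^-1 a with b = b(a), let b(y), b(y a^-1) be the elements of
   B attached to y and y a^-1, and let e in A satisfy B^(e w^-1) = A for
   w = b(y) b^-1.  Then b(y a^-1)^mu = e a: both lie in A, and their quotient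
   is the composite of conjugations B -> A -> B -> A -> B, so it normalizes B. *)
Lemma conj_b_quotient (a b y bx by_ e : X) : A a -> A e -> B bx ->
  maps_to A ((a ** inv b) ** a) B -> maps_to B ((a ** inv b) ** a) A ->
  maps_to A (bx ** inv (y ** inv a)) B -> maps_to A (by_ ** inv y) B ->
  maps_to B (e ** inv (by_ ** inv b)) A ->
  conj X bx ((a ** inv b) ** a) = e ** a.
Proof.
  intros Ha He Hbx HAm HBm Hx Hy Hw.
  destruct A_subgroup as [_ [Hmul _]].
  apply eq_of_normalizes_B; auto; [apply HBm; exact Hbx|].
  assert (Hy' := maps_to_inv _ _ _ Hy). rewrite invMg, invgK in Hy'.
  assert (Hw' := maps_to_inv _ _ _ Hw). rewrite invMg, invgK in Hw'.
  pose proof (maps_to_comp _ _ _ _ _ (maps_to_comp _ _ _ _ _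
    (maps_to_comp _ _ _ _ _ (maps_to_inv _ _ _ HAm) Hx) Hy') Hw') as P.
  replace (conj X bx ((a ** inv b) ** a) ** inv (e ** a)) with
    (((inv ((a ** inv b) ** a) ** (bx ** inv (y ** inv a))) ** (y ** inv by_))
       ** ((by_ ** inv b) ** inv e)) by (unfold conj; gsimpl; reflexivity).
  exact P.
Qed.

Lemma square_from_relations (e y a : X) : A e -> A y -> A a ->
  congK (e ** a) (inv (y ** inv a)) -> congK (inv e) (inv y ** a) ->
  congK (y ** y) a.
Proof.
  intros He Hy Ha Hea Hinve. destruct A_subgroup as [_ [Hmul Hinv]].
  assert (He_inv : congK e (inv (y ** inv a) ** inv a)).
  { pose proof (congK_mul _ _ _ _ (Hinv a Ha) Hea (congK_refl (inv a))) as P.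
    replace ((e ** a) ** inv a) with e in P by (gsimpl; reflexivity). exact P. }
  assert (Hinve_y : congK (inv e) y).
  { pose proof (congK_inv _ _ He He_inv) as P.
    replace (inv (inv (y ** inv a) ** inv a)) with y in P; [exact P|].
    rewrite (A_comm y (inv a)) by auto. gsimpl. reflexivity. }
  assert (Hy_rel : congK y (inv y ** a)) by (eapply congK_trans;
    [apply congK_sym; exact Hinve_y | exact Hinve]).
  pose proof (congK_mul _ _ _ _ (Hmul _ _ (Hinv y Hy) Ha) (congK_refl y) Hy_rel) as P.
  rewrite mulKVg in P. exact P.
Qed.

Lemma square_congK (y a : X) : A y -> A a -> y <> gone X -> a <> gone X -> y <> a ->
  congK (y ** y) a.
Proof.
  intros Hy Ha Hny Hna Hya.
  destruct A_subgroup as [_ [Hmul Hinv]].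
  destruct B_subgroup as [_ [HmulB HinvB]].
  destruct (b_exists a Ha Hna) as [b [Hb [Hnb Hab]]].
  destruct (mu_swaps a b Ha Hna Hb Hnb Hab) as [HAm HBm].
  assert (Hmu_b := mu_conj_binv a b Ha Hna Hb Hnb Hab).
  set (mu := (a ** inv b) ** a) in *.
  assert (Hx : A (y ** inv a)) by auto.
  assert (Hnx : y ** inv a <> gone X) by (intro Ex; apply Hya, eq_of_mul_inv, Ex).
  destruct (b_exists _ Hx Hnx) as [bx [Hbx [Hnbx Hx']]].
  destruct (b_exists y Hy Hny) as [by_ [Hby [Hnby Hy']]].
  assert (Hw : B (by_ ** inv b)) by auto.
  assert (Hnw : by_ ** inv b <> gone X).
  { intro Ew. apply eq_of_mul_inv in Ew. subst by_. apply Hya, eq_of_normalizes_B; auto.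
    pose proof (maps_to_comp _ _ _ _ _ (maps_to_inv _ _ _ Hy') Hab) as P.
    replace (inv (b ** inv y) ** (b ** inv a)) with (y ** inv a) in P
      by (gsimpl; reflexivity). exact P. }
  destruct (a_exists _ Hw Hnw) as [e [He [Hne Hew]]].
  assert (Hwe : maps_to A ((by_ ** inv b) ** inv e) B).
  { pose proof (maps_to_inv _ _ _ Hew) as P. rewrite invMg, invgK in P. exact P. }
  apply (square_from_relations e); auto.
  - rewrite <- (conj_b_quotient a b y bx by_ e); auto.
    apply conj_b_swap; auto.
  - apply congK_trans with (conj X (by_ ** inv b) mu).
    + apply congK_sym, conj_b_swap; auto.
    + rewrite conjM, Hmu_b. apply congK_mul; auto.
      * apply conj_b_swap; auto.
      * apply congK_refl.
Qed.

(* t == t^2 == q == p^2 == t: a nontrivial t in A is congruent to its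
   square, hence lies in K.  This needs two further nontrivial elements. *)
Lemma A_sub_commAH : card_ge4 X A -> forall t, A t -> commAH t.
Proof.
  intros H4 t Ht. destruct (classic (t = gone X)) as [->|Hnt]; [apply commAH_subgroup|].
  destruct (two_avoiding A (gone X) t H4)
    as (p & q & Hp & Hq & Hpq & Hp1 & Hpt & Hq1 & Hqt).
  assert (Hpt2 := square_congK p t Hp Ht Hp1 Hnt Hpt).
  assert (Hpq2 := square_congK p q Hp Hq Hp1 Hq1 Hpq).
  assert (Htq2 := square_congK t q Ht Hq Hnt Hq1 (fun E => Hqt (eq_sym E))).
  assert (Htq : congK t q) by (eapply congK_trans; [apply congK_sym, Hpt2 | exact Hpq2]).
  assert (Htt : congK (t ** t) t) by (eapply congK_trans; [exact Htq2 | apply congK_sym, Htq]).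
  unfold congK in Htt. rewrite mulKg in Htt. exact Htt.
Qed.

End RankOne.

Theorem theorem1p1 (X : group) (A B : X -> Prop) :
  rank_one X A B -> special X A B -> card_ge4 X A ->
  set_eq X A
    (commsub X A (fun h => normalizer X A h /\ normalizer X B h)).
Proof.
  intros rankAB specialAB H4. change (set_eq X A (commAH A B)). intro t; split.
  - apply A_sub_commAH; auto.
  - apply commAH_sub_A; auto.
Qed.
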